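(* Let $\epsilon<1/2$, $S\subseteq\{0,1\}^n$ and $f:S\to\{0,1\}$. If $f$ is $\epsilon$-approximated by functions $\{f_j\}_{j\in J}$ with $\mathsf{sumPI}(f_j)\le s$ for every $j\in J$, then $\mathsf{sumPI}(f)\le s/(1-2\epsilon)$.
   Context: $f$ is $\epsilon$-approximated by $\{f_j\}_{j\in J}$, $f_j:S\to\{0,1\}$, if there is a probability distribution $\alpha$ on $J$ such that for every $x\in S$, $\Pr_{j\sim\alpha}[f(x)=f_j(x)]\ge1-\epsilon$. For $g:S\to\{0,1\}$, with $p=\{p_x:x\in S\}$ ranging over families of probability distributions on $[n]$, $$\mathsf{sumPI}(g)=\min_{p}\ \max_{x,y\in S:\ g(x)\neq g(y)} \frac{1}{\sum_{i:\,x_i\neq y_i}\sqrt{p_x(i)p_y(i)}}.$$ *)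

From HB Require Import structures.
From mathcomp Require Import all_boot all_order all_algebra.
From mathcomp Require Import all_classical all_reals ereal.
Set Implicit Arguments. Unset Strict Implicit. Unset Printing Implicit Defensive.
Import Order.TTheory GRing.Theory Num.Theory.
Local Open Scope ring_scope.
Local Open Scope classical_set_scope.

Notation cube n := {ffun 'I_n -> bool}.

Definition is_distr (R : realType) (J : finType) (alpha : J -> R) : Prop :=
  (forall j, 0 <= alpha j) /\ \sum_(j : J) alpha j = 1.

Definition eps_approx (R : realType) (n : nat) (J : finType)
    (S : {set cube n}) (eps : R)
    (f : cube n -> bool) (fs : J -> cube n -> bool) : Prop :=
  exists alpha : J -> R, is_distr alpha /\
    forall x, x \in S -> \sum_(j | f x == fs j x) alpha j >= 1 - eps.

Definition prob_family (R : realType) (n : nat) (S : {set cube n})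
    (p : cube n -> 'I_n -> R) : Prop :=
  forall x, x \in S -> is_distr (p x).

Definition pair_cost (R : realType) (n : nat) (p : cube n -> 'I_n -> R)
    (x y : cube n) : \bar R :=
  let t := \sum_(i | x i != y i) Num.sqrt (p x i * p y i) in
  if t == 0 then +oo%E else (t^-1)%:E.

Definition sumPI_obj (R : realType) (n : nat) (S : {set cube n})
    (g : cube n -> bool) (p : cube n -> 'I_n -> R) : \bar R :=
  ereal_sup [set z | exists x y, [/\ x \in S, y \in S, g x != g y &
                                       z = pair_cost p x y]].

(* sumPI(g) = min over admissible p of the objective (taken as an inf;
   the min is attained by compactness). *)
Definition sumPI {R : realType} (n : nat) (S : {set cube n})
    (g : cube n -> bool) : \bar R :=
  ereal_inf [set z | exists p, prob_family S p /\ z = sumPI_obj S g p].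

From HB Require Import structures.
From mathcomp Require Import all_boot all_order all_algebra.
From mathcomp Require Import all_classical all_reals ereal.
From mathcomp Require Import ring lra.
Set Implicit Arguments. Unset Strict Implicit. Unset Printing Implicit Defensive.
Import Order.TTheory GRing.Theory Num.Theory.
Local Open Scope ring_scope.

(* Fix r > s and pick, for each j, a weight family p_j witnessing sumPI(f_j) < r;
   mix them with the weights alpha of the approximation.  For x, y in S with
   f x <> f y, the indices j at which f_j agrees with f on both x and y carry
   alpha-mass at least 1 - 2 eps, and each of them has overlap
   sum_{x_i <> y_i} sqrt(p_j,x(i) p_j,y(i)) >= 1/r.  Since (u, v) |-> sqrt(u v)
   is concave (weighted Cauchy-Schwarz), the overlap of the mixture dominates the
   alpha-average of the overlaps, hence is at least (1 - 2 eps)/r. *)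

Lemma weighted_cauchy_schwarz (R : realFieldType) (J : finType) (a u v : J -> R) :
  (forall j, 0 <= a j) ->
  (\sum_j a j * (u j * v j)) ^+ 2 <=
  (\sum_j a j * u j ^+ 2) * (\sum_j a j * v j ^+ 2).
Proof.
move=> a_ge0.
set P := \sum_j _ * u j ^+ 2; set Q := \sum_j _ * v j ^+ 2.
have square_sum : (\sum_j a j * (u j * v j)) ^+ 2 =
    \sum_j \sum_k a j * a k * (u j * v k * (u k * v j)).
  rewrite expr2 mulr_suml; apply: eq_bigr => j _.
  by rewrite mulr_sumr; apply: eq_bigr => k _; ring.
have PQ_sum : P * Q = \sum_j \sum_k a j * a k * (u j * v k) ^+ 2.
  rewrite mulr_suml; apply: eq_bigr => j _.
  by rewrite mulr_sumr; apply: eq_bigr => k _; ring.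
have PQ_sum_swap : P * Q = \sum_j \sum_k a j * a k * (u k * v j) ^+ 2.
  rewrite PQ_sum exchange_big; apply: eq_bigr => j _; apply: eq_bigr => k _.
  by rewrite [a k * _]mulrC.
suff : 2 * (\sum_j a j * (u j * v j)) ^+ 2 <= P * Q + P * Q by lra.
rewrite square_sum {1}PQ_sum PQ_sum_swap mulr_sumr -big_split /=.
apply: ler_sum => j _; rewrite mulr_sumr -big_split /=.
apply: ler_sum => k _; rewrite mulrCA -mulrDr ler_wpM2l ?mulr_ge0 //.
have := sqr_ge0 (u j * v k - u k * v j); rewrite !expr2; lra.
Qed.

Lemma sum_sqrt_mul_le (R : rcfType) (J : finType) (a u v : J -> R) :
  (forall j, 0 <= a j) -> (forall j, 0 <= u j) -> (forall j, 0 <= v j) ->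
  \sum_j a j * Num.sqrt (u j * v j) <=
  Num.sqrt ((\sum_j a j * u j) * (\sum_j a j * v j)).
Proof.
move=> a_ge0 u_ge0 v_ge0.
have lhs_ge0 : 0 <= \sum_j a j * Num.sqrt (u j * v j).
  by apply: sumr_ge0 => j _; rewrite mulr_ge0 ?sqrtr_ge0.
rewrite -(ger0_norm lhs_ge0) -sqrtr_sqr ler_sqrt; last first.
  by rewrite mulr_ge0 // sumr_ge0 // => j _; rewrite mulr_ge0.
have := weighted_cauchy_schwarz (Num.sqrt \o u) (Num.sqrt \o v) a_ge0.
rewrite /=; under eq_bigr do rewrite -sqrtrM //.
by under [X in _ <= X * _]eq_bigr do rewrite sqr_sqrtr //;
   under [X in _ <= _ * X]eq_bigr do rewrite sqr_sqrtr //.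
Qed.

Lemma sum_predI_ge (R : realDomainType) (J : finType) (a : J -> R) (A B : pred J) :
  (forall j, 0 <= a j) -> \sum_j a j = 1 ->
  \sum_(j | A j) a j + \sum_(j | B j) a j - 1 <= \sum_(j | A j && B j) a j.
Proof.
move=> a_ge0 a_sum1.
rewrite -a_sum1 !(big_mkcond A) !(big_mkcond B) (big_mkcond (fun j => A j && B j)).
rewrite -big_split /= lerBlDr -big_split /=.
by apply: ler_sum => j _; have := a_ge0 j; case: (A j); case: (B j) => /=; lra.
Qed.

Section SumPI.
Variables (R : realType) (n : nat) (S : {set cube n}).
Implicit Types (p : cube n -> 'I_n -> R) (g : cube n -> bool) (x y : cube n).

Definition pair_sum p x y := \sum_(i | x i != y i) Num.sqrt (p x i * p y i).

Lemma pair_sum_ge0 p x y : 0 <= pair_sum p x y.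
Proof. by apply: sumr_ge0 => i _; exact: sqrtr_ge0. Qed.

Lemma pair_cost_gt0 p x y : (0 < pair_cost p x y)%E.
Proof.
rewrite /pair_cost -/(pair_sum p x y); case: eqP => // /eqP sum_neq0.
by rewrite lte_fin invr_gt0 lt_def sum_neq0 pair_sum_ge0.
Qed.

Lemma pair_cost_le p x y (r : R) :
  0 < r -> (pair_cost p x y <= r%:E)%E = (r^-1 <= pair_sum p x y).
Proof.
move=> r_gt0; rewrite /pair_cost -/(pair_sum p x y).
have [->|sum_neq0] := eqVneq (pair_sum p x y) 0.
  by rewrite leye_eq /= lt_geF // invr_gt0.
have sum_gt0 : 0 < pair_sum p x y by rewrite lt_def sum_neq0 pair_sum_ge0.
by rewrite lee_fin -[leRHS]invrK lef_pV2 ?posrE ?invr_gt0.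
Qed.

Lemma sumPI_le_family g p (r : \bar R) :
  prob_family S p ->
  (forall x y, x \in S -> y \in S -> g x != g y -> (pair_cost p x y <= r)%E) ->
  (sumPI S g <= r)%E.
Proof.
move=> p_distr cost_le; apply: le_trans (ereal_inf_lbound _) _; first by exists p.
by apply: ge_ereal_sup => _ [x [y [xS yS gxy ->]]]; exact: cost_le.
Qed.

Lemma sumPI_lt_family g (r : \bar R) :
  (sumPI S g < r)%E ->
  exists2 p, prob_family S p &
    forall x y, x \in S -> y \in S -> g x != g y -> (pair_cost p x y < r)%E.
Proof.
case/ereal_inf_lt => _ [p [p_distr ->]] obj_lt; exists p => // x y xS yS gxy.
by apply: le_lt_trans obj_lt; apply: ereal_sup_ubound; exists x, y.
Qed.

Section Mixture.
Variables (J : finType) (a : J -> R) (P : J -> cube n -> 'I_n -> R).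
Hypotheses (a_distr : is_distr a) (P_distr : forall j, prob_family S (P j)).

Definition mix_family x i := \sum_j a j * P j x i.

Lemma prob_family_mix : prob_family S mix_family.
Proof.
have [a_ge0 a_sum1] := a_distr.
move=> x xS; split=> [i|].
  by apply: sumr_ge0 => j _; rewrite mulr_ge0 // (P_distr j xS).1.
rewrite /mix_family exchange_big /= -a_sum1; apply: eq_bigr => j _.
by rewrite -mulr_sumr (P_distr j xS).2 mulr1.
Qed.

Lemma pair_sum_mix_ge x y : x \in S -> y \in S ->
  \sum_j a j * pair_sum (P j) x y <= pair_sum mix_family x y.
Proof.
move=> xS yS; under eq_bigr do rewrite mulr_sumr.
rewrite exchange_big /=; apply: ler_sum => i _.
apply: sum_sqrt_mul_le => [j|j|j]; first exact: a_distr.1.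
  exact: (P_distr j xS).1.
exact: (P_distr j yS).1.
Qed.

End Mixture.

Lemma sumPI_approx_le (J : finType) (eps r : R) (f : cube n -> bool)
    (fs : J -> cube n -> bool) :
  0 < 1 - 2 * eps -> eps_approx S eps f fs ->
  (forall j, (sumPI S (fs j) < r%:E)%E) ->
  (sumPI S f <= (r / (1 - 2 * eps))%:E)%E.
Proof.
move=> c_gt0 [a [a_distr approx]] sumPI_lt.
have [a_ge0 a_sum1] := a_distr.
have /boolp.choice [P P_spec] : forall j, exists p, prob_family S p /\
    forall x y, x \in S -> y \in S -> fs j x != fs j y ->
      (pair_cost p x y < r%:E)%E.
  by move=> j; have [p ? ?] := sumPI_lt_family (sumPI_lt j); exists p.
have P_distr j : prob_family S (P j) := (P_spec j).1.
apply: (sumPI_le_family (prob_family_mix a_distr P_distr)) => x y xS yS fxy.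
pose G j := (f x == fs j x) && (f y == fs j y).
have G_mass : 1 - 2 * eps <= \sum_(j | G j) a j.
  apply: le_trans (sum_predI_ge _ _ a_ge0 a_sum1).
  by have := approx x xS; have := approx y yS; lra.
have G_cost j : G j -> (pair_cost (P j) x y < r%:E)%E.
  by case/andP => /eqP fx /eqP fy; apply: (P_spec j).2; rewrite // -fx -fy.
have r_gt0 : 0 < r.
  have [j Gj|G0] := pickP G; last by move: G_mass; rewrite big_pred0 //; lra.
  by rewrite -lte_fin; apply: lt_trans (G_cost j Gj); exact: pair_cost_gt0.
rewrite pair_cost_le ?divr_gt0 // invf_div.
apply: le_trans (pair_sum_mix_ge a_distr P_distr xS yS).
apply: le_trans (_ : \sum_(j | G j) a j * r^-1 <= _).
  by rewrite -mulr_suml ler_wpM2r // invr_ge0 ltW.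
rewrite [leRHS](bigID G) /= -[leLHS]addr0 lerD //.
  apply: ler_sum => j Gj; rewrite ler_wpM2l // -pair_cost_le //.
  exact: ltW (G_cost j Gj).
by apply: sumr_ge0 => j _; rewrite mulr_ge0 ?pair_sum_ge0.
Qed.

End SumPI.

Theorem mainTheorem8 (R : realType) (n : nat) (J : finType) (eps s : R)
    (S : {set cube n}) (f : cube n -> bool) (fs : J -> cube n -> bool) :
  eps < 1 / 2 ->
  eps_approx S eps f fs ->
  (forall j : J, (sumPI (R := R) S (fs j) <= s%:E)%E) ->
  (sumPI (R := R) S f <= (s / (1 - 2 * eps))%:E)%E.
Proof.
move=> eps_lt approx sumPI_le.
have c_gt0 : 0 < 1 - 2 * eps by lra.
apply/lee_addgt0Pr => e e_gt0; rewrite -EFinD.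
have -> : s / (1 - 2 * eps) + e = (s + e * (1 - 2 * eps)) / (1 - 2 * eps).
  by field; rewrite gt_eqF.
apply: (sumPI_approx_le c_gt0 approx) => j; apply: le_lt_trans (sumPI_le j) _.
by rewrite lte_fin ltrDl mulr_gt0.
Qed.
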